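(* For positive scores $0<s_1\le s_2\le\dots\le s_n$ and integer budget $B\ge1$, the output $\mathbf h=\mathrm{RAS}(s_1,\dots,s_n;B)$ belongs to $\mathcal A$ and satisfies $\mathbf h\in\arg\min_{\mathbf a\in\mathcal A}\|\mathbf a\odot\mathbf s\|_\infty$.
   Context: $\mathcal A=\{\mathbf a\in\mathbb N^n:\|\mathbf a\|_1=B\}$ ($\mathbb N$ includes $0$); $\odot$ is the entrywise product and $\mathbf e_i$ the $i$-th unit vector. RAS$(s_1,\dots,s_n;B)$ with sorted scores $s_1\le\dots\le s_n$: if $B=1$ return $\mathbf e_1$. Otherwise let $\mathbf a=\mathrm{RAS}(s_1,\dots,s_n;B-1)$; let $r=\min\{i:a_i=0\}$ if $a_n=0$, else $r=n$; let $M=\arg\min_{i\in[r]}\|(\mathbf a+\mathbf e_i)\odot\mathbf s\|_\infty$; choose any $j\in M$ minimizing the cardinality of $\arg\max_{i\in[r]}(a_i+e_{j,i})s_i$; return $\mathbf a+\mathbf e_j$. *)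

From mathcomp Require Import all_boot all_order all_algebra.
Set Implicit Arguments. Unset Strict Implicit. Unset Printing Implicit Defensive.
Import Order.TTheory GRing.Theory Num.Theory.
Local Open Scope ring_scope.

(* Allocations are vectors in N^n, indexed 0-based by 'I_n
   (paper index i corresponds to ordinal with value i-1). *)
Notation alloc n := {ffun 'I_n -> nat}.

Definition unitv (n : nat) (i : 'I_n) : alloc n :=
  [ffun k => (k == i : nat)].

Definition e1 (n : nat) : alloc n := [ffun k : 'I_n => (val k == 0%N : nat)].

Definition addv (n : nat) (a b : alloc n) : alloc n := [ffun k => (a k + b k)%N].

(* ||a (.) s||_oo  (all entries are nonnegative for nonnegative s) *)
Definition inf_norm (R : realFieldType) (n : nat) (s : 'I_n -> R) (a : alloc n) : R :=
  \big[Num.max/0]_(i < n) ((a i)%:R * s i).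

(* r : if a_n = 0 then min{i : a_i = 0} (1-based), else n *)
Definition rval (n : nat) (a : alloc n) : nat :=
  if [exists i : 'I_n, (val i == n.-1) && (a i == 0%N)]
  then (find (fun i : 'I_n => a i == 0%N) (enum 'I_n)).+1
  else n.

(* i \in [r] (1-based), i.e. 0-based value < r *)
Definition inr (n : nat) (a : alloc n) (i : 'I_n) : bool := (val i < rval a)%N.

Definition inM (R : realFieldType) (n : nat) (s : 'I_n -> R) (a : alloc n) (j : 'I_n) : Prop :=
  inr a j /\ forall i : 'I_n, inr a i ->
    inf_norm s (addv a (unitv j)) <= inf_norm s (addv a (unitv i)).

Definition argmax_card (R : realFieldType) (n : nat) (s : 'I_n -> R) (a : alloc n) (j : 'I_n) : nat :=
  let b := addv a (unitv j) in
  #|[set i : 'I_n | inr a i &&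
      ((b i)%:R * s i == \big[Num.max/0]_(k < n | inr a k) ((b k)%:R * s k))]|.

(* RAS as a relation: RAS s B h  <->  h is a possible output of RAS(s_1..s_n; B)
   (the algorithm allows an arbitrary choice among tied j's). *)
Inductive RAS (R : realFieldType) (n : nat) (s : 'I_n -> R) : nat -> alloc n -> Prop :=
| RAS_one : RAS s 1 (e1 n)
| RAS_step (B : nat) (a : alloc n) (j : 'I_n) :
    RAS s B.+1 a ->
    inM s a j ->
    (forall j' : 'I_n, inM s a j' -> (argmax_card s a j <= argmax_card s a j')%N) ->
    RAS s B.+2 (addv a (unitv j)).

From mathcomp Require Import all_boot all_order all_algebra.
Import Order.TTheory GRing.Theory Num.Theory.
Local Open Scope ring_scope.
Set Implicit Arguments. Unset Strict Implicit.

(* If a is optimal for budget B and b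
   has budget B + 1, some coordinate i has a_i < b_i.  Removing one unit at i
   from b gives budget B, so ||a.s|| <= ||b.s||, and (a_i + 1) s_i <= b_i s_i
   <= ||b.s||; hence ||(a + e_i).s|| <= ||b.s||.  RAS only searches the indices
   in [r], but an index i outside [r] lies past the zero coordinate r of a,
   and s_r <= s_i since the scores are sorted, so a + e_r does at least as
   well as a + e_i. *)

Lemma sum_unitv n (i : 'I_n) : (\sum_(k < n) unitv i k)%N = 1%N.
Proof.
rewrite (bigD1 i) //= ffunE eqxx big1 // => k /negbTE ki.
by rewrite ffunE ki.
Qed.

Lemma sum_addv_unitv n (a : alloc n) (j : 'I_n) :
  (\sum_(k < n) addv a (unitv j) k = (\sum_(k < n) a k).+1)%N.
Proof.
under eq_bigr => k _ do rewrite ffunE.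
by rewrite big_split /= sum_unitv addn1.
Qed.

Lemma addv_unitv_predK n (b : alloc n) (i : 'I_n) : (0 < b i)%N ->
  b = addv [ffun k => (b k - (k == i))%N] (unitv i).
Proof.
move=> bi_gt0; apply/ffunP => k; rewrite !ffunE.
by case: eqVneq => [->|_]; rewrite ?subnK ?subn0 ?addn0.
Qed.

Lemma exists_ltn_of_sum_ltn n (F G : 'I_n -> nat) :
  (\sum_(k < n) F k < \sum_(k < n) G k)%N -> exists i, (F i < G i)%N.
Proof.
move=> sum_lt; apply/existsP; apply: contraLR sum_lt => /existsPn FgeG.
by rewrite -leqNgt; apply: leq_sum => k _; rewrite leqNgt FgeG.
Qed.

(* [r] is a proper prefix of the indices only when a_n = 0, and then r is
   the first zero coordinate of a. *)
Lemma notin_r_first_zero n (a : alloc n) (i : 'I_n) : ~~ inr a i ->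
  exists r : 'I_n, [/\ a r = 0%N, inr a r & (r < i)%N].
Proof.
rewrite /inr /rval; case: ifP => [/existsP [l /andP [_ /eqP al0]]|_]; last first.
  by rewrite ltn_ord.
set p := fun k : 'I_n => a k == 0%N; rewrite -leqNgt => r_lt_i.
have has_zero : has p (enum 'I_n).
  by apply/hasP; exists l; rewrite ?mem_enum /p ?al0.
have r_lt_n : (find p (enum 'I_n) < n)%N.
  by rewrite -[X in (_ < X)%N](size_enum_ord n) -has_find.
have rE : nth l (enum 'I_n) (find p (enum 'I_n)) = Ordinal r_lt_n.
  by apply: val_inj; rewrite /= nth_enum_ord.
by exists (Ordinal r_lt_n); split=> //; apply/eqP; rewrite -rE; exact: (nth_find l has_zero).
Qed.

Section SupNorm.
Variables (R : realFieldType) (n : nat) (s : 'I_n -> R).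
Hypothesis s_gt0 : forall i, 0 < s i.

Lemma ler_natM_score (m p : nat) (k : 'I_n) : (m <= p)%N -> m%:R * s k <= p%:R * s k.
Proof. by move=> mp; rewrite ler_wpM2r ?ler_nat ?ltW. Qed.

Lemma ler_score_natSM (m : nat) (k : 'I_n) : s k <= m.+1%:R * s k.
Proof. by rewrite ler_peMl ?ler1n ?ltW. Qed.

Lemma inf_norm_ge0 (a : alloc n) : 0 <= inf_norm s a.
Proof.
apply: (big_ind (fun x => 0 <= x)) => [//|x y x0 _|k _].
  by rewrite le_max x0.
by rewrite mulr_ge0 ?ler0n ?ltW.
Qed.

Lemma ler_inf_norm (a : alloc n) (k : 'I_n) : (a k)%:R * s k <= inf_norm s a.
Proof. by rewrite /inf_norm (bigD1 k) //= le_max lexx. Qed.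

Lemma inf_norm_le (a : alloc n) (T : R) : 0 <= T ->
  (forall k, (a k)%:R * s k <= T) -> inf_norm s a <= T.
Proof.
move=> T0 aT; apply: (big_ind (fun x => x <= T)) => // x y xT yT.
by rewrite ge_max xT yT.
Qed.

Lemma inf_norm_addv_unitv_le (a : alloc n) (i : 'I_n) (T : R) :
  inf_norm s a <= T -> (a i).+1%:R * s i <= T ->
  inf_norm s (addv a (unitv i)) <= T.
Proof.
move=> aT aiT; apply: inf_norm_le => [|k]; first exact: le_trans (inf_norm_ge0 a) aT.
rewrite !ffunE; case: eqVneq => [->|_]; first by rewrite addn1.
by rewrite addn0 (le_trans (ler_inf_norm a k)).
Qed.

Lemma le_inf_norm (a b : alloc n) : (forall k, a k <= b k)%N ->
  inf_norm s a <= inf_norm s b.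
Proof.
move=> ab; apply: inf_norm_le => [|k]; first exact: inf_norm_ge0.
exact: le_trans (ler_natM_score k (ab k)) (ler_inf_norm b k).
Qed.

Definition optimal_alloc (B : nat) (h : alloc n) : Prop :=
  (\sum_(i < n) h i)%N = B /\
  forall a : alloc n, (\sum_(i < n) a i)%N = B -> inf_norm s h <= inf_norm s a.

Hypothesis s_sorted : forall i j : 'I_n, (i <= j)%N -> s i <= s j.

Lemma e1_optimal (n_gt0 : (0 < n)%N) : optimal_alloc 1 (e1 n).
Proof.
pose i0 := Ordinal n_gt0.
have e1E : e1 n = unitv i0.
  by apply/ffunP => k; rewrite !ffunE; congr nat_of_bool; apply/eqP/eqP => [/val_inj|->].
rewrite e1E; split=> [|b b_sum]; first exact: sum_unitv.
have [i bi_gt0] : exists i, (0 < b i)%N by apply: exists_ltn_of_sum_ltn; rewrite big1 ?b_sum.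
apply: inf_norm_le => [|k]; first exact: inf_norm_ge0.
rewrite ffunE; case: eqVneq => [->|_] /=; last by rewrite mul0r inf_norm_ge0.
rewrite mul1r (le_trans (@s_sorted i0 i (leq0n _))) //.
rewrite (le_trans _ (ler_inf_norm b i)) //.
by rewrite -(prednK bi_gt0) ler_score_natSM.
Qed.

Lemma exists_inr_bump_le (a : alloc n) (k : 'I_n) :
  exists2 i, inr a i & (a i).+1%:R * s i <= (a k).+1%:R * s k.
Proof.
have [kr|/notin_r_first_zero [r [ar0 rr r_lt_k]]] := boolP (inr a k).
  by exists k.
exists r => //; rewrite ar0 mul1r (le_trans (s_sorted (ltnW r_lt_k))) //.
exact: ler_score_natSM.
Qed.

Lemma inM_optimal (B : nat) (a : alloc n) (j : 'I_n) :
  optimal_alloc B a -> inM s a j -> optimal_alloc B.+1 (addv a (unitv j)).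
Proof.
move=> [a_sum a_opt] [_ j_min]; split=> [|b b_sum]; first by rewrite sum_addv_unitv a_sum.
have [k ak_lt] : exists k, (a k < b k)%N.
  by apply: exists_ltn_of_sum_ltn; rewrite a_sum b_sum.
set b' : alloc n := [ffun i => (b i - (i == k))%N].
have bE : b = addv b' (unitv k) by apply: addv_unitv_predK; exact: leq_ltn_trans ak_lt.
have ab : inf_norm s a <= inf_norm s b.
  apply: le_trans (a_opt b' _) (le_inf_norm _) => [|i].
    by apply/eqP; rewrite -eqSS -(sum_addv_unitv b' k) -bE b_sum.
  by rewrite ffunE leq_subr.
have [i ir ai_le] := exists_inr_bump_le a k.
apply: le_trans (j_min i ir) _; apply: inf_norm_addv_unitv_le => //.
by rewrite (le_trans ai_le) // (le_trans (ler_natM_score k ak_lt)) ?ler_inf_norm.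
Qed.

End SupNorm.

Theorem lemmaC2 (R : realFieldType) (n : nat) (s : 'I_n -> R)
  (hn : (0 < n)%N)
  (hpos : forall i : 'I_n, 0 < s i)
  (hsorted : forall i j : 'I_n, (i <= j)%N -> s i <= s j)
  (B : nat) (hB : (1 <= B)%N) (h : {ffun 'I_n -> nat}) :
  RAS s B h ->
  (\sum_(i < n) h i)%N = B /\
  forall a : {ffun 'I_n -> nat}, (\sum_(i < n) a i)%N = B ->
    inf_norm s h <= inf_norm s a.
Proof.
elim=> [|B' a j _ a_opt jM _]; first exact: e1_optimal.
exact: inM_optimal.
Qed.
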